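(* Let $\widetilde V:[-1,1]\to\mathbb R$ be smooth and $V(\vec n)=\widetilde V(\vec n\cdot e_z)$ on $S^2$. Let $\vec n:[0,T]\to S^2$ be a smooth solution of $$D_t^3\dot{\vec n}+R(D_t\dot{\vec n},\dot{\vec n})\dot{\vec n}+\operatorname{grad}V(\vec n)=0 .$$ Then the quantity $$J_z(t)=\Big\langle \tfrac{d}{dt}\big(D_t\dot{\vec n}(t)\big),X(\vec n(t))\Big\rangle-\Big\langle D_t\dot{\vec n}(t),D_tX(\vec n(t))\Big\rangle$$ is constant in $t$.
   Context: $S^2\subset\mathbb R^3$ is the unit sphere with the round metric $\langle\cdot,\cdot\rangle$ (restriction of the Euclidean inner product), Levi--Civita connection $\nabla$, covariant derivative $D_t$ along curves, and $D_t^3\dot{\vec n}=D_t(D_t(D_t\dot{\vec n}))$. Its curvature tensor is $R(a,b)c=(b\cdot c)a-(a\cdot c)b$ for tangent vectors $a,b,c$. $\operatorname{grad}V$ is the Riemannian gradient of $V$ (equivalently the tangential projection of the Euclidean gradient of any smooth extension). $e_z=(0,0,1)$, $X(\vec n)=e_z\times\vec n$ is the Killing vector field generating rotations about the $z$-axis, and $D_tX(\vec n(t))=\nabla_{\dot{\vec n}}X$. In $J_z$, $\tfrac{d}{dt}(D_t\dot{\vec n})$ is the ordinary derivative in $\mathbb R^3$ of the vector $D_t\dot{\vec n}(t)\in\mathbb R^3$. *)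

From Stdlib Require Import Reals.
From Coquelicot Require Import Coquelicot.
Open Scope R_scope.

Record R3 := mkR3 { cx : R ; cy : R ; cz : R }.

Definition vadd (a b : R3) : R3 := mkR3 (cx a + cx b) (cy a + cy b) (cz a + cz b).
Definition vscal (r : R) (a : R3) : R3 := mkR3 (r * cx a) (r * cy a) (r * cz a).
Definition vsub (a b : R3) : R3 := vadd a (vscal (-1) b).
Definition dot (a b : R3) : R := cx a * cx b + cy a * cy b + cz a * cz b.
Definition cross (a b : R3) : R3 :=
  mkR3 (cy a * cz b - cz a * cy b) (cz a * cx b - cx a * cz b) (cx a * cy b - cy a * cx b).
Definition e_x : R3 := mkR3 1 0 0.
Definition e_y : R3 := mkR3 0 1 0.
Definition e_z : R3 := mkR3 0 0 1.

Definition on_S2 (p : R3) : Prop := dot p p = 1.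

Definition tproj (p v : R3) : R3 := vsub v (vscal (dot v p) p).

Definition vderive (Y : R -> R3) (t : R) : R3 :=
  mkR3 (Derive (fun s => cx (Y s)) t) (Derive (fun s => cy (Y s)) t)
       (Derive (fun s => cz (Y s)) t).

Definition smooth_curve (Y : R -> R3) : Prop :=
  forall (k : nat) (t : R),
    ex_derive_n (fun s => cx (Y s)) k t /\
    ex_derive_n (fun s => cy (Y s)) k t /\
    ex_derive_n (fun s => cz (Y s)) k t.

Definition smooth_fun (f : R -> R) : Prop := forall (k : nat) (x : R), ex_derive_n f k x.

(** Levi-Civita covariant derivative along the curve n on the round S^2
    (induced metric): D_t Y = tangential projection of dY/dt. *)
Definition Dt (n : R -> R3) (Y : R -> R3) : R -> R3 :=
  fun t => tproj (n t) (vderive Y t).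

Definition ndot (n : R -> R3) : R -> R3 := vderive n.

Definition Rcurv (a b c : R3) : R3 := vsub (vscal (dot b c) a) (vscal (dot a c) b).

Definition egrad (W : R3 -> R) (p : R3) : R3 :=
  mkR3 (Derive (fun s => W (vadd p (vscal s e_x))) 0)
       (Derive (fun s => W (vadd p (vscal s e_y))) 0)
       (Derive (fun s => W (vadd p (vscal s e_z))) 0).

(** Riemannian gradient on S^2 = tangential projection of the Euclidean
    gradient of a smooth extension W. *)
Definition gradS2 (W : R3 -> R) (p : R3) : R3 := tproj p (egrad W p).

(** The potential V(n) = Vt(n . e_z), extended to R^3 by the same formula. *)
Definition Vpot (Vt : R -> R) (p : R3) : R := Vt (dot p e_z).

(** Killing field generating rotations about the z-axis. *)
Definition Xkill (p : R3) : R3 := cross e_z p.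

Definition Jz (n : R -> R3) (t : R) : R :=
  dot (vderive (Dt n (ndot n)) t) (Xkill (n t))
  - dot (Dt n (ndot n) t) (Dt n (fun s => Xkill (n s)) t).

From Stdlib Require Import Reals Lra.
From Coquelicot Require Import Coquelicot.
Open Scope R_scope.

(* Differentiating J_z along a solution gives <E, X(n)> plus multiples of
   |n|^2 - 1 and of n.n'' + |n'|^2, where E is the left-hand side of the
   equation of motion; both multiples vanish since |n|^2 = 1 holds identically,
   and pairing with X(n) kills everything normal to S^2.  The potential drops
   out altogether: grad V is a combination of e_z and n, both orthogonal to
   X(n) = e_z x n. *)

Lemma is_derive_Rplus (f g : R -> R) (t a b : R) :
  is_derive f t a -> is_derive g t b -> is_derive (fun s => f s + g s) t (a + b).
Proof. exact (is_derive_plus f g t a b). Qed.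

Lemma is_derive_Rminus (f g : R -> R) (t a b : R) :
  is_derive f t a -> is_derive g t b -> is_derive (fun s => f s - g s) t (a - b).
Proof. exact (is_derive_minus f g t a b). Qed.

Lemma is_derive_Rmult (f g : R -> R) (t a b : R) :
  is_derive f t a -> is_derive g t b ->
  is_derive (fun s => f s * g s) t (a * g t + f t * b).
Proof. intros Hf Hg. exact (is_derive_mult f g t a b Hf Hg Rmult_comm). Qed.

Lemma is_derive_locally_const_eq0 (f : R -> R) (a b c t l : R) :
  a < t < b -> (forall s, a < s < b -> f s = c) -> is_derive f t l -> l = 0.
Proof.
  intros Ht Hc Hf.
  assert (Hloc : locally t (fun s => f s = c)).
  { apply (filter_imp (fun s => a < s < b)); [exact Hc|].
    apply (open_and (fun s => a < s) (fun s => s < b));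
      [apply open_gt | apply open_lt | exact Ht]. }
  pose proof (is_derive_unique _ _ _ (is_derive_ext_loc f (fun _ => c) t l Hloc Hf)) as H.
  rewrite Derive_const in H. symmetry; exact H.
Qed.

Lemma is_derive_zero_eq (f : R -> R) (a b : R) :
  (forall t, ex_derive f t) -> (forall t, a < t < b -> is_derive f t 0) ->
  forall s t, a <= s <= b -> a <= t <= b -> f s = f t.
Proof.
  intros Hf Hf0 s t Hs Ht.
  destruct (MVT_gen f s t (fun _ => 0)) as [c [_ Hc]].
  - intros x Hx. apply Hf0. unfold Rmin, Rmax in Hx; destruct (Rle_dec s t); lra.
  - intros x _. apply continuity_pt_filterlim.
    exact (ex_derive_continuous (K:=R_AbsRing) (V:=R_NormedModule) f x (Hf x)).
  - lra.
Qed.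

Lemma R3_eta (a : R3) : a = mkR3 (cx a) (cy a) (cz a).
Proof. destruct a; reflexivity. Qed.

Ltac R3_ring :=
  repeat match goal with a : R3 |- _ => destruct a end;
  unfold tproj, Rcurv, Xkill, cross, vsub, vadd, vscal, dot, e_z; simpl; ring.

Lemma dotC (a b : R3) : dot a b = dot b a.
Proof. R3_ring. Qed.

Lemma dot_vaddl (a b c : R3) : dot (vadd a b) c = dot a c + dot b c.
Proof. R3_ring. Qed.

Lemma dot_vscall (r : R) (a b : R3) : dot (vscal r a) b = r * dot a b.
Proof. R3_ring. Qed.

Lemma dot_Rcurvl (a b c d : R3) :
  dot (Rcurv a b c) d = dot b c * dot a d - dot a c * dot b d.
Proof. R3_ring. Qed.

Lemma dot_e_z_Xkill (p : R3) : dot e_z (Xkill p) = 0.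
Proof. R3_ring. Qed.

Lemma dot_tproj_Xkill (p a : R3) : dot (tproj p a) (Xkill p) = dot a (Xkill p).
Proof. R3_ring. Qed.

Lemma dot_tproj_Xkillr (p a v : R3) :
  dot a (tproj p (Xkill v)) = dot a (Xkill v) + dot a p * dot v (Xkill p).
Proof. R3_ring. Qed.

Definition tproj_deriv (p p' a a' : R3) : R3 :=
  vsub a' (vadd (vscal (dot a' p + dot a p') p) (vscal (dot a p) p')).

Lemma dot_tproj_deriv_Xkill (p v a a' : R3) :
  dot (tproj_deriv p v a a') (Xkill p) = dot a' (Xkill p) - dot a p * dot v (Xkill p).
Proof. unfold tproj_deriv. R3_ring. Qed.

Lemma dot_tproj_tproj_deriv_Xkill (p v w : R3) :
  dot (tproj p w) (tproj_deriv p v (Xkill v) (Xkill w)) =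
  dot (tproj p w) v * dot v (Xkill p) - dot v v * dot (tproj p w) (Xkill p)
  - dot p (Xkill w) * (dot p w + dot v v + dot p w * (1 - dot p p)).
Proof. unfold tproj_deriv. R3_ring. Qed.

(* dJ_z/dt in terms of the jet (p, v, w) = (n, n', n'') and of
   b = d/dt (D_t n'), a = d/dt b; see [is_derive_Jz]. *)
Definition Jz_rate (p v w b a : R3) : R :=
  dot a (Xkill p) + dot b (Xkill v)
  - (dot b (tproj p (Xkill v)) + dot (tproj p w) (tproj_deriv p v (Xkill v) (Xkill w))).

Lemma Jz_rate_eq0 (p v w b a : R3) (g : R) :
  dot p p = 1 -> dot p w + dot v v = 0 ->
  vadd (vadd (tproj p (tproj_deriv p v b a)) (Rcurv (tproj p w) v v))
       (tproj p (vscal g e_z)) = mkR3 0 0 0 ->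
  Jz_rate p v w b a = 0.
Proof.
  intros Hpp Hpwv Heq.
  assert (HEX : dot (mkR3 0 0 0) (Xkill p) = 0) by (unfold dot; simpl; ring).
  rewrite <- Heq, !dot_vaddl, !dot_tproj_Xkill, dot_tproj_deriv_Xkill, dot_Rcurvl,
    dot_vscall, dot_e_z_Xkill in HEX.
  unfold Jz_rate. rewrite dot_tproj_Xkillr, dot_tproj_tproj_deriv_Xkill, Hpp, Hpwv.
  lra.
Qed.

Definition is_vderive (F : R -> R3) (t : R) (F' : R3) : Prop :=
  is_derive (fun s => cx (F s)) t (cx F') /\
  is_derive (fun s => cy (F s)) t (cy F') /\
  is_derive (fun s => cz (F s)) t (cz F').

Lemma is_vderive_unique (F : R -> R3) (t : R) (F' : R3) :
  is_vderive F t F' -> vderive F t = F'.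
Proof.
  intros [Hx [Hy Hz]]. rewrite (R3_eta F'). unfold vderive.
  f_equal; apply is_derive_unique; assumption.
Qed.

Lemma is_vderive_ext (F G : R -> R3) (t : R) (F' : R3) :
  (forall s, F s = G s) -> is_vderive F t F' -> is_vderive G t F'.
Proof.
  intros HFG [Hx [Hy Hz]].
  split; [|split]; eapply is_derive_ext; try eassumption;
    intro s; simpl; rewrite HFG; reflexivity.
Qed.

Lemma is_vderive_plus (F G : R -> R3) (t : R) (F' G' : R3) :
  is_vderive F t F' -> is_vderive G t G' ->
  is_vderive (fun s => vadd (F s) (G s)) t (vadd F' G').
Proof.
  intros [Fx [Fy Fz]] [Gx [Gy Gz]].
  split; [|split]; apply is_derive_Rplus; assumption.
Qed.

Lemma is_vderive_minus (F G : R -> R3) (t : R) (F' G' : R3) :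
  is_vderive F t F' -> is_vderive G t G' ->
  is_vderive (fun s => vsub (F s) (G s)) t (vsub F' G').
Proof.
  intros [Fx [Fy Fz]] [Gx [Gy Gz]].
  split; [|split]; apply is_derive_Rplus; try apply is_derive_scal; assumption.
Qed.

Lemma is_vderive_scal (f : R -> R) (F : R -> R3) (t f' : R) (F' : R3) :
  is_derive f t f' -> is_vderive F t F' ->
  is_vderive (fun s => vscal (f s) (F s)) t (vadd (vscal f' (F t)) (vscal (f t) F')).
Proof.
  intros Hf [Fx [Fy Fz]].
  split; [|split]; apply is_derive_Rmult; assumption.
Qed.

Lemma is_derive_dot (F G : R -> R3) (t : R) (F' G' : R3) :
  is_vderive F t F' -> is_vderive G t G' ->
  is_derive (fun s => dot (F s) (G s)) t (dot F' (G t) + dot (F t) G').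
Proof.
  intros [Fx [Fy Fz]] [Gx [Gy Gz]].
  (* Applying the product rules against the expanded target value makes
     unification unfold [is_derive]; compute the value first instead. *)
  evar (l : R); assert (H : is_derive (fun s => dot (F s) (G s)) t l).
  { unfold dot, l.
    apply is_derive_Rplus; [apply is_derive_Rplus|]; apply is_derive_Rmult; eassumption. }
  replace (dot F' (G t) + dot (F t) G') with l; [exact H|].
  unfold l, dot; ring.
Qed.

Lemma is_vderive_Xkill (F : R -> R3) (t : R) (F' : R3) :
  is_vderive F t F' -> is_vderive (fun s => Xkill (F s)) t (Xkill F').
Proof.
  intros [Fx [Fy Fz]]. unfold Xkill, cross, e_z; simpl.
  split; [|split]; apply is_derive_Rminus; apply is_derive_scal; assumption.
Qed.

Lemma is_vderive_tproj (P A : R -> R3) (t : R) (P' A' : R3) :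
  is_vderive P t P' -> is_vderive A t A' ->
  is_vderive (fun s => tproj (P s) (A s)) t (tproj_deriv (P t) P' (A t) A').
Proof.
  intros HP HA. unfold tproj, tproj_deriv.
  apply is_vderive_minus; [exact HA|].
  apply is_vderive_scal; [apply is_derive_dot|]; assumption.
Qed.

Lemma is_vderive_vderive (F : R -> R3) (t : R) (F' : R3) :
  is_vderive F t F' -> is_vderive F t (vderive F t).
Proof. intros H. rewrite (is_vderive_unique _ _ _ H). exact H. Qed.

Lemma ex_vderive_tproj_deriv (P P' A A' : R -> R3) (t : R) (dP dP' dA dA' : R3) :
  is_vderive P t dP -> is_vderive P' t dP' -> is_vderive A t dA -> is_vderive A' t dA' ->
  exists F, is_vderive (fun s => tproj_deriv (P s) (P' s) (A s) (A' s)) t F.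
Proof.
  intros HP HP' HA HA'. eexists. unfold tproj_deriv.
  apply (is_vderive_minus A' (fun s => vadd (vscal (dot (A' s) (P s) + dot (A s) (P' s)) (P s))
                                            (vscal (dot (A s) (P s)) (P' s))));
    [exact HA'|].
  apply (is_vderive_plus (fun s => vscal (dot (A' s) (P s) + dot (A s) (P' s)) (P s))
                         (fun s => vscal (dot (A s) (P s)) (P' s))).
  - apply (is_vderive_scal (fun s => dot (A' s) (P s) + dot (A s) (P' s)) P); [|exact HP].
    apply (is_derive_Rplus (fun s => dot (A' s) (P s)) (fun s => dot (A s) (P' s)));
      apply is_derive_dot; eassumption.
  - apply (is_vderive_scal (fun s => dot (A s) (P s)) P'); [|exact HP'].
    apply is_derive_dot; eassumption.
Qed.

Definition vderive_n (F : R -> R3) (k : nat) (t : R) : R3 :=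
  mkR3 (Derive_n (fun s => cx (F s)) k t) (Derive_n (fun s => cy (F s)) k t)
       (Derive_n (fun s => cz (F s)) k t).

Lemma egrad_Vpot (Vt : R -> R) (p : R3) :
  egrad (Vpot Vt) p = vscal (cz (egrad (Vpot Vt) p)) e_z.
Proof.
  unfold egrad, vscal, e_z; simpl. rewrite !Rmult_0_r, Rmult_1_r. f_equal.
  - rewrite (Derive_ext _ (fun _ => Vt (cz p))); [apply Derive_const|]; intro s.
    unfold Vpot, dot, vadd, vscal, e_x, e_z; simpl. f_equal; ring.
  - rewrite (Derive_ext _ (fun _ => Vt (cz p))); [apply Derive_const|]; intro s.
    unfold Vpot, dot, vadd, vscal, e_y, e_z; simpl. f_equal; ring.
Qed.

Section SmoothCurve.

Variable n : R -> R3.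
Hypothesis n_smooth : smooth_curve n.

Local Notation nd := (vderive_n n).

Lemma is_vderive_vderive_n (k : nat) (t : R) : is_vderive (nd k) t (nd (S k) t).
Proof.
  destruct (n_smooth (S k) t) as [Hx [Hy Hz]].
  split; [|split]; apply Derive_correct; assumption.
Qed.

Lemma is_vderive_curve (t : R) : is_vderive n t (nd 1 t).
Proof.
  apply (is_vderive_ext (nd 0)); [intro s; symmetry; apply R3_eta|].
  apply is_vderive_vderive_n.
Qed.

Definition ddt_Dt_ndot (t : R) : R3 := tproj_deriv (n t) (nd 1 t) (nd 2 t) (nd 3 t).

Lemma is_vderive_Dt_ndot (t : R) : is_vderive (Dt n (ndot n)) t (ddt_Dt_ndot t).
Proof.
  apply (is_vderive_ext (fun s => tproj (n s) (nd 2 s))); [reflexivity|].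
  apply is_vderive_tproj; [apply is_vderive_curve | apply is_vderive_vderive_n].
Qed.

Lemma is_vderive_ddt_Dt_ndot (t : R) : is_vderive ddt_Dt_ndot t (vderive ddt_Dt_ndot t).
Proof.
  destruct (ex_vderive_tproj_deriv n (nd 1) (nd 2) (nd 3) t _ _ _ _ (is_vderive_curve t)
    (is_vderive_vderive_n 1 t) (is_vderive_vderive_n 2 t) (is_vderive_vderive_n 3 t)) as [F HF].
  exact (is_vderive_vderive _ _ _ HF).
Qed.

Lemma Dt3_ndot (t : R) :
  Dt n (Dt n (Dt n (ndot n))) t =
  tproj (n t) (tproj_deriv (n t) (nd 1 t) (ddt_Dt_ndot t) (vderive ddt_Dt_ndot t)).
Proof.
  unfold Dt at 1. f_equal. apply is_vderive_unique.
  apply (is_vderive_ext (fun s => tproj (n s) (ddt_Dt_ndot s))).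
  - intro s. unfold Dt at 1. rewrite (is_vderive_unique _ _ _ (is_vderive_Dt_ndot s)). reflexivity.
  - apply is_vderive_tproj; [apply is_vderive_curve | apply is_vderive_ddt_Dt_ndot].
Qed.

Lemma Dt_Xkill (t : R) : Dt n (fun s => Xkill (n s)) t = tproj (n t) (Xkill (nd 1 t)).
Proof.
  unfold Dt. f_equal. apply is_vderive_unique, is_vderive_Xkill, is_vderive_curve.
Qed.

Lemma Jz_jet (t : R) :
  Jz n t = dot (ddt_Dt_ndot t) (Xkill (n t))
           - dot (tproj (n t) (nd 2 t)) (tproj (n t) (Xkill (nd 1 t))).
Proof.
  unfold Jz. rewrite Dt_Xkill, (is_vderive_unique _ _ _ (is_vderive_Dt_ndot t)). reflexivity.
Qed.

Lemma is_derive_Jz (t : R) :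
  is_derive (Jz n) t
    (Jz_rate (n t) (nd 1 t) (nd 2 t) (ddt_Dt_ndot t) (vderive ddt_Dt_ndot t)).
Proof.
  apply (is_derive_ext (fun s => dot (ddt_Dt_ndot s) (Xkill (n s))
           - dot (tproj (n s) (nd 2 s)) (tproj (n s) (Xkill (nd 1 s))))).
  { intro s; symmetry; apply Jz_jet. }
  unfold Jz_rate. apply is_derive_Rminus; apply is_derive_dot.
  - apply is_vderive_ddt_Dt_ndot.
  - apply is_vderive_Xkill, is_vderive_curve.
  - apply is_vderive_tproj; [apply is_vderive_curve | apply is_vderive_vderive_n].
  - apply is_vderive_tproj; [apply is_vderive_curve|].
    apply is_vderive_Xkill, is_vderive_vderive_n.
Qed.

Lemma sphere_jet_constraint (a b t : R) :
  (forall s, a <= s <= b -> on_S2 (n s)) -> a < t < b ->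
  dot (n t) (nd 2 t) + dot (nd 1 t) (nd 1 t) = 0.
Proof.
  intros HS2 Ht.
  assert (Hnv : forall s, a < s < b -> dot (n s) (nd 1 s) = 0).
  { intros s Hs.
    assert (Hd := is_derive_dot n n s _ _ (is_vderive_curve s) (is_vderive_curve s)).
    apply (is_derive_locally_const_eq0 _ a b 1) in Hd; [| exact Hs |].
    - rewrite dotC in Hd. lra.
    - intros u Hu. apply HS2. lra. }
  assert (Hd := is_derive_dot n (nd 1) t _ _ (is_vderive_curve t) (is_vderive_vderive_n 1 t)).
  apply (is_derive_locally_const_eq0 _ a b 0) in Hd; [lra | exact Ht | exact Hnv].
Qed.

End SmoothCurve.

Theorem mainTheorem7 (Vt : R -> R) (n : R -> R3) (T : R) :
  smooth_fun Vt ->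
  smooth_curve n ->
  (forall t, 0 <= t <= T -> on_S2 (n t)) ->
  (forall t, 0 <= t <= T ->
     vadd (vadd (Dt n (Dt n (Dt n (ndot n))) t)
                (Rcurv (Dt n (ndot n) t) (ndot n t) (ndot n t)))
          (gradS2 (Vpot Vt) (n t)) = mkR3 0 0 0) ->
  forall s t, 0 <= s <= T -> 0 <= t <= T -> Jz n s = Jz n t.
Proof.
  intros _ Hn HS2 Heq.
  apply is_derive_zero_eq; [intro t; eexists; apply (is_derive_Jz n Hn) |].
  intros t Ht.
  assert (Ht' : 0 <= t <= T) by lra.
  specialize (Heq t Ht').
  rewrite (Dt3_ndot n Hn) in Heq. unfold gradS2 in Heq. rewrite egrad_Vpot in Heq.
  erewrite <- (Jz_rate_eq0 _ _ _ _ _ _ (HS2 t Ht') (sphere_jet_constraint n Hn 0 T t HS2 Ht) Heq).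
  apply is_derive_Jz, Hn.
Qed.
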